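(* Let $\Delta x>0$ and define $g_\tau(x)=\dfrac{\tfrac12 x}{\sinh(\tfrac12 x)}$ for $x\neq0$, $g_\tau(0)=1$. Then the function $h(x)=g_\tau(\Delta x)\,e^x$ is the reconstruction pair of $\exp$, i.e. $e^x=\frac{1}{\Delta x}\int_{x-\frac12\Delta x}^{x+\frac12\Delta x}h(\zeta)\,d\zeta$ for all real $x$. Moreover $g_\tau$ is the generating function of the numbers $\tau_n$: setting $\tau_n:=\frac{1}{n!}g_\tau^{(n)}(0)$ for all $n\in\mathbb{N}_0$, one has $\tau_{2n+1}=0$ for all $n\in\mathbb{N}_0$, $\tau_0=1$, and $\tau_{2k}=\sum_{s=0}^{k-1}\frac{-\tau_{2s}}{2^{2k-2s}(2k-2s+1)!}$ for all $k>0$. *)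

From Stdlib Require Import Reals Factorial.
From Coquelicot Require Import Coquelicot.
Open Scope R_scope.

Definition g_tau (x : R) : R :=
  if Req_EM_T x 0 then 1 else (x / 2) / sinh (x / 2).

Definition h_exp (dx : R) (x : R) : R := g_tau dx * exp x.

Definition tau (n : nat) : R := Derive_n g_tau n 0 / INR (fact n).

(** Write [S(x) := 2 sinh(x/2) / x = sum_n ((1/2)^(n+1) - (-1/2)^(n+1)) x^n / (n+1)!],
    an even power series with constant term 1. Then [g_tau = 1 / S] near 0, so the
    [tau_n] are the coefficients of the reciprocal series, given by the Cauchy-product
    recursion [sum_(j <= n) tau_j s_(n-j) = 0] for [n > 0]. Since [S] is even, so is its
    reciprocal, and the recursion restricted to even indices is the stated one. The
    reconstruction identity is the computation
    [int_(x-dx/2)^(x+dx/2) e^t dt = e^x * 2 sinh(dx/2) = e^x * dx / g_tau dx]. *)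
From Stdlib Require Import Reals Factorial Lia Lra.
From Coquelicot Require Import Coquelicot.
Open Scope R_scope.

Lemma sum_f_R0_opp (F : nat -> R) n :
  sum_f_R0 (fun i => - F i) n = - sum_f_R0 F n.
Proof. induction n as [|n IH]; simpl; [|rewrite IH]; ring. Qed.

Lemma sum_f_R0_pairs (F : nat -> R) n :
  sum_f_R0 F (2 * n + 1) = sum_f_R0 (fun i => F (2 * i)%nat + F (2 * i + 1)%nat) n.
Proof.
  induction n as [|n IH]; [simpl; ring|].
  replace (2 * S n + 1)%nat with (S (S (2 * n + 1))) by lia.
  rewrite !tech5, IH.
  replace (S (2 * n + 1)) with (2 * S n)%nat by lia.
  replace (S (2 * S n)) with (2 * S n + 1)%nat by lia. ring.
Qed.

Lemma pow_opp_even (y : R) m : (- y) ^ (2 * m) = y ^ (2 * m).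
Proof. rewrite !pow_mult. f_equal. ring. Qed.

Lemma sinh_neq0 y : y <> 0 -> sinh y <> 0.
Proof.
  intros Hy. rewrite <- sinh_0. destruct (Rlt_or_le y 0).
  - apply Rlt_not_eq, sinh_lt. assumption.
  - apply not_eq_sym, Rlt_not_eq, sinh_lt. lra.
Qed.

Lemma Rbar_lt_CV_radius_of_pow2_bound (c : nat -> R) x :
  (forall n, Rabs (c n) <= 2 ^ n) -> Rabs x < / 2 -> Rbar_lt (Rabs x) (CV_radius c).
Proof.
  intros Hc Hx. apply Rbar_lt_le_trans with (Finite (/ 2)); [exact Hx|].
  apply (proj1 (CV_radius_bounded c)). exists 1. intros n.
  rewrite Rabs_mult, <- RPow_abs, (Rabs_right (/ 2)) by lra.
  apply Rle_trans with (2 ^ n * (/ 2) ^ n).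
  - apply Rmult_le_compat_r; [apply pow_le; lra | apply Hc].
  - rewrite <- Rpow_mult_distr, Rinv_r, pow1 by lra. lra.
Qed.

Section ReciprocalSeries.

Variable a : nat -> R.

(* [recip_upto n] holds the first [n + 1] reciprocal coefficients; [a 0] is
   never read, the recursion is that of [1 / PSeries a] when [a 0 = 1]. *)
Fixpoint recip_upto (n : nat) : nat -> R :=
  match n with
  | O => fun _ => 1
  | S m => fun i => if (i <=? m)%nat then recip_upto m i
                    else - sum_f_R0 (fun j => recip_upto m j * a (S m - j)) m
  end.

Definition ps_recip (n : nat) : R := recip_upto n n.

Lemma recip_upto_le n i : (i <= n)%nat -> recip_upto n i = ps_recip i.
Proof.
  induction n as [|n IH]; intros Hi.
  - replace i with 0%nat by lia. reflexivity.
  - destruct (Nat.eq_dec i (S n)) as [->|Hne]; [reflexivity|].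
    simpl. rewrite (proj2 (Nat.leb_le i n)) by lia. apply IH. lia.
Qed.

Lemma ps_recip_0 : ps_recip 0 = 1.
Proof. reflexivity. Qed.

Lemma ps_recip_S n :
  ps_recip (S n) = - sum_f_R0 (fun j => ps_recip j * a (S n - j)) n.
Proof.
  unfold ps_recip at 1. cbn [recip_upto].
  rewrite (proj2 (Nat.leb_gt (S n) n)) by lia.
  f_equal. apply sum_eq. intros j Hj. rewrite recip_upto_le by lia. reflexivity.
Qed.

Lemma PS_mult_ps_recip (Ha0 : a 0 = 1) n :
  PS_mult ps_recip a n = match n with O => 1 | S _ => 0 end.
Proof.
  unfold PS_mult. destruct n as [|n].
  - simpl. rewrite Ha0, ps_recip_0. ring.
  - rewrite tech5, Nat.sub_diag, Ha0, ps_recip_S. ring.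
Qed.

Lemma Rabs_ps_recip_le (Ha : forall n, Rabs (a n) <= 1) n :
  Rabs (ps_recip n) <= 2 ^ n.
Proof.
  induction n as [n IH] using (well_founded_induction Wf_nat.lt_wf).
  destruct n as [|n]; [rewrite ps_recip_0, Rabs_R1; simpl; lra|].
  rewrite ps_recip_S, Rabs_Ropp.
  eapply Rle_trans; [apply sum_f_R0_triangle|].
  apply Rle_trans with (sum_f_R0 (fun j => 2 ^ j) n).
  - apply sum_Rle. intros j Hj. rewrite Rabs_mult, <- (Rmult_1_r (2 ^ j)).
    apply Rmult_le_compat; [apply Rabs_pos | apply Rabs_pos | apply IH; lia | apply Ha].
  - pose proof (GP_finite 2 n) as Hgp. rewrite Nat.add_1_r in Hgp. lra.
Qed.

Lemma PSeries_ps_recip_mul (Ha0 : a 0 = 1) (Ha : forall n, Rabs (a n) <= 1) x :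
  Rabs x < / 2 -> PSeries ps_recip x * PSeries a x = 1.
Proof.
  intros Hx.
  assert (Rb : Rbar_lt (Rabs x) (CV_radius ps_recip))
    by exact (Rbar_lt_CV_radius_of_pow2_bound _ x (Rabs_ps_recip_le Ha) Hx).
  assert (Ra : Rbar_lt (Rabs x) (CV_radius a)).
  { apply Rbar_lt_CV_radius_of_pow2_bound; [|exact Hx].
    intros n. eapply Rle_trans; [apply Ha | apply pow_R1_Rle; lra]. }
  rewrite <- (PSeries_mult _ _ _ Rb Ra).
  rewrite PSeries_decr_1 by (apply ex_pseries_mult; assumption).
  rewrite (PSeries_ext _ (fun _ => 0)).
  - rewrite PSeries_const_0, PS_mult_ps_recip by exact Ha0. ring.
  - intros n. unfold PS_decr_1. rewrite PS_mult_ps_recip by exact Ha0. reflexivity.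
Qed.

Lemma ps_recip_odd (Hodd : forall p, a (2 * p + 1) = 0) m :
  ps_recip (2 * m + 1) = 0.
Proof.
  induction m as [m IH] using (well_founded_induction Wf_nat.lt_wf).
  replace (2 * m + 1)%nat with (S (2 * m)) by lia.
  rewrite ps_recip_S, sum_eq_R0; [ring|]. intros j Hj.
  destruct (Nat.Even_or_Odd j) as [[i ->]|[i ->]].
  - replace (S (2 * m) - 2 * i)%nat with (2 * (m - i) + 1)%nat by lia.
    rewrite Hodd. ring.
  - rewrite IH by lia. ring.
Qed.

Lemma ps_recip_even_S (Hodd : forall p, a (2 * p + 1) = 0) k :
  ps_recip (2 * S k) =
  - sum_f_R0 (fun s => ps_recip (2 * s) * a (2 * (S k - s))%nat) k.
Proof.
  replace (2 * S k)%nat with (S (2 * k + 1)) at 1 by lia.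
  rewrite ps_recip_S, sum_f_R0_pairs. f_equal. apply sum_eq. intros i Hi.
  rewrite ps_recip_odd by exact Hodd.
  replace (S (2 * k + 1) - 2 * i)%nat with (2 * (S k - i))%nat by lia. ring.
Qed.

End ReciprocalSeries.

Lemma is_pseries_exp_scal (c x : R) :
  is_pseries (fun n => c ^ n / INR (fact n)) x (exp (c * x)).
Proof.
  eapply is_series_ext; [|exact (is_exp_Reals (c * x))].
  intros n. unfold scal; cbn. unfold mult; cbn.
  rewrite (pow_n_pow (c * x)), (pow_n_pow x n : @pow_n (AbsRing.Ring R_AbsRing) x n = x ^ n).
  rewrite Rpow_mult_distr. unfold Rdiv. ring.
Qed.

Definition sinh_half_coef (n : nat) : R :=
  ((/ 2) ^ S n - (- / 2) ^ S n) / INR (fact (S n)).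

Lemma sinh_half_coef_0 : sinh_half_coef 0 = 1.
Proof. unfold sinh_half_coef. simpl. field. Qed.

Lemma sinh_half_coef_odd p : sinh_half_coef (2 * p + 1) = 0.
Proof.
  unfold sinh_half_coef. replace (S (2 * p + 1)) with (2 * S p)%nat by lia.
  rewrite pow_opp_even. unfold Rdiv. ring.
Qed.

Lemma sinh_half_coef_even q :
  sinh_half_coef (2 * q) = / (2 ^ (2 * q) * INR (fact (2 * q + 1))).
Proof.
  unfold sinh_half_coef. replace (S (2 * q)) with (2 * q + 1)%nat by lia.
  rewrite !pow_add, pow_opp_even, !pow_inv, !pow_1.
  field. split; [apply INR_fact_neq_0 | apply pow_nonzero; lra].
Qed.

Lemma Rabs_sinh_half_coef_le n : Rabs (sinh_half_coef n) <= 1.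
Proof.
  assert (Hhalf : 0 <= (/ 2) ^ n <= 1).
  { induction n as [|n IH]; simpl; lra. }
  assert (Hnum : Rabs ((/ 2) ^ S n - (- / 2) ^ S n) <= 1).
  { unfold Rminus. eapply Rle_trans; [apply Rabs_triang|].
    rewrite Rabs_Ropp, <- !RPow_abs, Rabs_Ropp, Rabs_right by lra. simpl. lra. }
  assert (Hfact : 1 <= INR (fact (S n))).
  { apply (le_INR 1). pose proof (lt_O_fact (S n)). lia. }
  unfold sinh_half_coef, Rdiv.
  rewrite Rabs_mult, Rabs_inv, (Rabs_right (INR _)) by lra.
  rewrite <- (Rmult_1_r 1). apply Rmult_le_compat; [apply Rabs_pos | | exact Hnum |].
  - left. apply Rinv_0_lt_compat. lra.
  - rewrite <- Rinv_1. apply Rinv_le_contravar; lra.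
Qed.

Lemma mul_PSeries_sinh_half_coef x :
  x * PSeries sinh_half_coef x = 2 * sinh (x / 2).
Proof.
  rewrite <- PSeries_incr_1.
  pose proof (is_pseries_minus _ _ x _ _
                (is_pseries_exp_scal (/ 2) x) (is_pseries_exp_scal (- / 2) x)) as Hexp.
  rewrite (PSeries_ext _ (PS_minus (fun n => (/ 2) ^ n / INR (fact n))
                                   (fun n => (- / 2) ^ n / INR (fact n)))).
  - rewrite (is_pseries_unique _ _ _ Hexp). unfold plus, opp, sinh; cbn.
    replace (- (x / 2)) with (- / 2 * x) by field.
    replace (x / 2) with (/ 2 * x) by field. field.
  - intros [|n]; unfold PS_incr_1, PS_minus, plus, opp; cbn -[fact pow].
    + unfold zero; cbn. field.
    + unfold sinh_half_coef, Rdiv. ring.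
Qed.

Lemma g_tau_mul_sinh_half x : g_tau x * (2 * sinh (x / 2)) = x.
Proof.
  unfold g_tau. destruct (Req_EM_T x 0) as [->|Hx0].
  - unfold Rdiv. rewrite Rmult_0_l, sinh_0. ring.
  - pose proof (sinh_neq0 (x / 2) ltac:(lra)). field. assumption.
Qed.

Definition tau_coef : nat -> R := ps_recip sinh_half_coef.

Lemma Rbar_lt_CV_radius_tau_coef x :
  Rabs x < / 2 -> Rbar_lt (Rabs x) (CV_radius tau_coef).
Proof.
  apply Rbar_lt_CV_radius_of_pow2_bound, Rabs_ps_recip_le, Rabs_sinh_half_coef_le.
Qed.

Lemma g_tau_PSeries x : Rabs x < / 2 -> g_tau x = PSeries tau_coef x.
Proof.
  intros Hx. destruct (Req_EM_T x 0) as [->|Hx0].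
  - rewrite PSeries_0. unfold g_tau. destruct (Req_EM_T 0 0); [reflexivity | lra].
  - set (A := PSeries sinh_half_coef x).
    assert (HBA : PSeries tau_coef x * A = 1).
    { apply PSeries_ps_recip_mul; [exact sinh_half_coef_0 | exact Rabs_sinh_half_coef_le | exact Hx]. }
    assert (HgA : g_tau x * A = 1).
    { apply (Rmult_eq_reg_l x); [|exact Hx0].
      transitivity (g_tau x * (x * A)); [ring|].
      unfold A. rewrite mul_PSeries_sinh_half_coef, g_tau_mul_sinh_half. ring. }
    rewrite <- (Rmult_1_r (g_tau x)), <- HBA.
    transitivity (PSeries tau_coef x * (g_tau x * A)); [ring | rewrite HgA; ring].
Qed.

Lemma g_tau_locally_PSeries :
  locally 0 (fun t : R_UniformSpace => PSeries tau_coef t = g_tau t).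
Proof.
  assert (Hr : 0 < / 2) by lra.
  exists (mkposreal _ Hr). intros y Hy. symmetry. apply g_tau_PSeries.
  change (Rabs (y - 0) < / 2) in Hy. rewrite Rminus_0_r in Hy. exact Hy.
Qed.

Lemma CV_radius_tau_coef_pos : Rbar_lt 0 (CV_radius tau_coef).
Proof.
  rewrite <- Rabs_R0. apply Rbar_lt_CV_radius_tau_coef. rewrite Rabs_R0. lra.
Qed.

Lemma ex_derive_n_g_tau n : ex_derive_n g_tau n 0.
Proof.
  apply (ex_derive_n_ext_loc _ _ n 0 g_tau_locally_PSeries).
  apply ex_derive_n_PSeries. rewrite Rabs_R0. exact CV_radius_tau_coef_pos.
Qed.

Lemma tau_eq_coef n : tau n = tau_coef n.
Proof.
  unfold tau. rewrite <- (Derive_n_ext_loc _ _ n 0 g_tau_locally_PSeries).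
  rewrite Derive_n_coef by exact CV_radius_tau_coef_pos.
  field. apply INR_fact_neq_0.
Qed.

Lemma is_RInt_scal_exp (c a b : R) :
  is_RInt (fun t => c * exp t) a b (c * (exp b - exp a)).
Proof.
  replace (c * (exp b - exp a)) with (minus (c * exp b) (c * exp a))
    by (unfold minus, plus, opp; cbn; ring).
  apply (is_RInt_derive (fun t => c * exp t)).
  - intros t _. apply is_derive_scal, is_derive_exp.
  - intros t _. apply (@ex_derive_continuous R_AbsRing R_NormedModule).
    exists (c * exp t). apply is_derive_scal, is_derive_exp.
Qed.

Lemma exp_centered_diff x d :
  exp (x + d / 2) - exp (x - d / 2) = exp x * (2 * sinh (d / 2)).
Proof.
  unfold sinh, Rminus. rewrite !exp_plus. field.
Qed.

Lemma h_exp_reconstruction dx x : 0 < dx ->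
  ex_RInt (h_exp dx) (x - dx / 2) (x + dx / 2) /\
  exp x = / dx * RInt (h_exp dx) (x - dx / 2) (x + dx / 2).
Proof.
  intros Hdx.
  assert (HI : is_RInt (h_exp dx) (x - dx / 2) (x + dx / 2)
                 (g_tau dx * (exp (x + dx / 2) - exp (x - dx / 2))))
    by exact (is_RInt_scal_exp (g_tau dx) _ _).
  split; [eexists; exact HI|].
  rewrite (is_RInt_unique _ _ _ _ HI), exp_centered_diff.
  transitivity (/ dx * exp x * (g_tau dx * (2 * sinh (dx / 2)))).
  - rewrite g_tau_mul_sinh_half. field. lra.
  - ring.
Qed.

Theorem theorem1 (dx : R) (Hdx : 0 < dx) :
  (forall x : R,
     ex_RInt (h_exp dx) (x - dx / 2) (x + dx / 2) /\
     exp x = / dx * RInt (h_exp dx) (x - dx / 2) (x + dx / 2)) /\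
  (forall n : nat, ex_derive_n g_tau n 0) /\
  (forall n : nat, tau (2 * n + 1) = 0) /\
  tau 0 = 1 /\
  (forall k : nat, (0 < k)%nat ->
     tau (2 * k) =
       sum_f_R0 (fun s => - tau (2 * s) /
                   (2 ^ (2 * k - 2 * s) * INR (fact (2 * k - 2 * s + 1))))
                (k - 1)).
Proof.
  split; [intros x; exact (h_exp_reconstruction dx x Hdx)|].
  split; [exact ex_derive_n_g_tau|].
  split; [intros n; rewrite tau_eq_coef; exact (ps_recip_odd _ sinh_half_coef_odd n)|].
  split; [rewrite tau_eq_coef; exact (ps_recip_0 _)|].
  intros [|k] Hk; [lia|].
  rewrite tau_eq_coef. unfold tau_coef.
  rewrite ps_recip_even_S by exact sinh_half_coef_odd.
  replace (S k - 1)%nat with k by lia.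
  rewrite <- sum_f_R0_opp. apply sum_eq. intros s Hs.
  replace (2 * S k - 2 * s)%nat with (2 * (S k - s))%nat by lia.
  rewrite sinh_half_coef_even, tau_eq_coef. unfold tau_coef, Rdiv. ring.
Qed.
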